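(* Let $\rho_{AB}$ be a bipartite state on systems $A,B$ of equal finite dimension $d$, each with observable $L=\sum_{n=0}^{d-1}n|n\rangle\langle n|$. If $\mathrm{modes}(\rho_{AB})\neq\{0\}$ but $[1,d-1]\cap\mathrm{modes}(\rho_{AB})=\emptyset$ — equivalently $\rho_{AB}=\rho_{AB}^{(0)}+\sum_{i\ge d}\rho_{AB}^{(i)}$ with $\sum_{i\ge d}\rho_{AB}^{(i)}\neq0$ — then $\rho_{AB}$ is not a product state.
   Context: $L_{AB}=L\otimes\mathbb{I}+\mathbb{I}\otimes L=\sum_c c\,\Pi_c$ with $\Pi_c$ its eigenprojectors. The $j$th mode of a bipartite operator $X$ is $X^{(j)}:=\sum_c\Pi_{c+j}X\Pi_c$, and $\mathrm{modes}(X):=\{j\in\mathbb{N}:X^{(j)}\neq0\}$. *)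

(* Complex scalars: an arbitrary numClosedFieldType C
   (e.g. the complex numbers R[i] over a real closed field, or algC). *)
From HB Require Import structures.
From mathcomp Require Import all_boot all_order all_algebra.
From mathcomp Require Export mxtens.
Unset Printing Implicit Defensive.
Import Order.TTheory GRing.Theory Num.Theory.
Local Open Scope ring_scope.

Section Defs.
Local Set Implicit Arguments.
Variable C : numClosedFieldType.

Definition adjmx {m n} (A : 'M[C]_(m, n)) : 'M[C]_(n, m) := (map_mx Num.conj A)^T.

Definition psd {n} (A : 'M[C]_n) : Prop :=
  A = adjmx A /\ forall v : 'cV[C]_n, 0 <= (adjmx v *m A *m v) 0 0.

Definition is_state {n} (A : 'M[C]_n) : Prop := psd A /\ \tr A = 1.

Definition Lobs (d : nat) : 'M[C]_d := diag_mx (\row_(i < d) (i : nat)%:R).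

Definition LAB (d : nat) : 'M[C]_(d * d) :=
  Lobs d *t (1%:M : 'M[C]_d) + (1%:M : 'M[C]_d) *t Lobs d.

Definition Pi (d c : nat) : 'M[C]_(d * d) :=
  \matrix_(i, j) ((i == j) && (LAB d i i == c%:R))%:R.

(* j-th mode: X^(j) = sum_c Pi_{c+j} X Pi_c ; the eigenvalues of L_AB are
   0, ..., 2d-2, so summing c over 0 .. 2d-1 covers all of them *)
Local Unset Implicit Arguments.
Definition mode (d j : nat) (X : 'M[C]_(d * d)) : 'M[C]_(d * d) :=
  \sum_(c < (2 * d)%N) Pi d (c + j) *m X *m Pi d c.

Definition modes (d : nat) (X : 'M[C]_(d * d)) : nat -> Prop :=
  fun j => mode d j X != 0.

Definition product_state (d : nat) (rho : 'M[C]_(d * d)) : Prop :=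
  exists (rA rB : 'M[C]_d), is_state rA /\ is_state rB /\ rho = rA *t rB.

End Defs.

Arguments mode {C}.
Arguments modes {C}.
Arguments product_state {C}.
Arguments adjmx {C m n}.
Arguments psd {C n}.
Arguments is_state {C n}.

(** A product of states has a nonzero diagonal entry [rA a0 a0 * rB b0 b0], hence mode 0.
    Every other mode [j] of [rA *t rB] comes from an entry [rA a a' * rB b b'] with
    [a + b = a' + b' + j].  If [j >= d] then [1 <= a - a' <= d - 1], and the entry
    [rA a a' * rB b0 b0] produces the low mode [a - a'], which was excluded. *)

From mathcomp Require Import all_boot all_order all_algebra.
From mathcomp Require Import zify.
Import GRing.Theory Num.Theory.
Local Open Scope ring_scope.

Lemma mxtrace_neq0_diag (R : pzRingType) n (A : 'M[R]_n) :
  \tr A != 0 -> exists i, A i i != 0.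
Proof.
move=> trA_neq0; apply/existsP; apply: contraNT trA_neq0 => /existsPn-diag0.
by rewrite /mxtrace big1 // => i _; apply/eqP/negbNE/diag0.
Qed.

Lemma diag_mx_mulmx_diag_mxE (R : pzSemiRingType) n (r s : 'rV[R]_n) (X : 'M[R]_n) i k :
  (diag_mx r *m X *m diag_mx s) i k = r 0 i * X i k * s 0 k.
Proof. by rewrite mul_mx_diag mul_diag_mx !mxE. Qed.

Section Modes.
Variables (C : numClosedFieldType) (d : nat).

Lemma LAB_tens_index (a b : 'I_d) :
  LAB C d (mxtens_index (a, b)) (mxtens_index (a, b)) = (a + b)%:R.
Proof. by rewrite /LAB mxE !tensmxE !mxE !eqxx /= !mulr1 !mul1r natrD. Qed.

Lemma Pi_diag_mx c : Pi C d c = diag_mx (\row_i (LAB C d i i == c%:R)%:R).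
Proof.
apply/matrixP => i j; rewrite !mxE.
by case: (i =P j) => [->|_]; rewrite ?mulr1n ?mulr0n ?andbF.
Qed.

Lemma Pi_mulmx_PiE c1 c2 (X : 'M[C]_(d * d)) i k :
  (Pi C d c1 *m X *m Pi C d c2) i k =
  (LAB C d i i == c1%:R)%:R * X i k * (LAB C d k k == c2%:R)%:R.
Proof. by rewrite !Pi_diag_mx diag_mx_mulmx_diag_mxE !mxE. Qed.

Lemma modeE j (X : 'M[C]_(d * d)) (a b a' b' : 'I_d) :
  mode d j X (mxtens_index (a, b)) (mxtens_index (a', b')) =
  (a + b == a' + b' + j)%N%:R * X (mxtens_index (a, b)) (mxtens_index (a', b')).
Proof.
have ab'_lt : (a' + b' < 2 * d)%N by have := ltn_ord a'; have := ltn_ord b'; lia.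
rewrite /mode summxE (bigD1 (Ordinal ab'_lt)) //= big1 => [|c c_neq].
  by rewrite Pi_mulmx_PiE !LAB_tens_index !eqr_nat eqxx mulr1 addr0.
rewrite Pi_mulmx_PiE !LAB_tens_index !eqr_nat.
suff /negPf-> : (a' + b' != c)%N by rewrite mulr0.
by apply: contra_neq c_neq => ab'c; exact/val_inj/esym.
Qed.

Lemma modes_tensP j (A B : 'M[C]_d) :
  modes d (A *t B) j <->
  exists a b a' b' : 'I_d, [/\ (a + b = a' + b' + j)%N, A a a' != 0 & B b b' != 0].
Proof.
split=> [/matrix0Pn[i [k]] | [a [b [a' [b' [ab_eq Aaa' Bbb']]]]]].
  case: (mxtens_indexP i) => a b; case: (mxtens_indexP k) => a' b'.
  rewrite modeE tensmxE; case: (boolP (a + b == a' + b' + j)%N) => [/eqP ab_eq|_].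
    by rewrite mul1r mulf_eq0 negb_or => /andP[]; exists a, b, a', b'.
  by rewrite mul0r eqxx.
apply/matrix0Pn; exists (mxtens_index (a, b)), (mxtens_index (a', b')).
by rewrite modeE tensmxE ab_eq eqxx mul1r mulf_neq0.
Qed.

End Modes.

Theorem lemma4 (C : numClosedFieldType) (d : nat) (rho : 'M[C]_(d * d)) :
  is_state rho ->
  ~ (forall j : nat, modes d rho j <-> j = 0%N) ->
  (forall j : nat, (1 <= j <= d - 1)%N -> ~ modes d rho j) ->
  ~ product_state d rho.
Proof.
move=> _ not_only_mode0 no_low_mode [rA [rB [[_ trA] [[_ trB] rho_tens]]]]; subst rho.
have [a0 rA_a0] : exists a0, rA a0 a0 != 0 by apply: mxtrace_neq0_diag; rewrite trA oner_eq0.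
have [b0 rB_b0] : exists b0, rB b0 b0 != 0 by apply: mxtrace_neq0_diag; rewrite trB oner_eq0.
apply: not_only_mode0 => j; split=> [|->]; last first.
  by apply/modes_tensP; exists a0, b0, a0, b0; rewrite addn0.
move=> /modes_tensP[a [b [a' [b' [ab_eq rA_aa' rB_bb']]]]].
have [//|j_gt0] := posnP j.
have [j_low|j_high] := leqP j (d - 1).
  by case: (no_low_mode j); [rewrite j_gt0 | apply/modes_tensP; exists a, b, a', b'].
have [[a_lt b_lt] a'_lt] := (ltn_ord a, ltn_ord b, ltn_ord a').
case: (no_low_mode (a - a')%N); first lia.
by apply/modes_tensP; exists a, b0, a', b0; split=> //; lia.
Qed.
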